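(* Let $|q|<1$ and let $(\alpha_n,\beta_n)$ be a Bailey pair with respect to $a$, with $|qa|<1$, no denominator vanishing, and all series converging absolutely. Then $$\sum_{n=1}^{\infty} (q^2;q^2)_{n-1}(-q a)^{n} \beta_n - \sum_{n=1}^{\infty}\frac{(q^2;q^2)_{n-1}(-q a)^{n}}{(q^2 a^2 ;q^2)_n}\alpha_n=f_3(a,q),$$ where $f_3(a,q)$ is given by each of the following (equal) expressions: $$f_3(a,q)=-\sum_{n=1}^{\infty} \frac{(q\sqrt{a},-q\sqrt{a},a;q)_{n}(-q;q)_{n-1}q^{n(n+1)/2}a^{n}}{(\sqrt{a},-\sqrt{a};q)_{n}(q^2 a^2;q^2)_{n}(1-q^n)} =\sum_{n=1}^{\infty} \frac{(-q;q)_{n-1}(-q a)^{n}}{(q a;q)_{n}(1-q^n)} =-\sum_{n=1}^{\infty}\frac{a q^n}{1-a^2q^{2n}}.$$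
   Context: Notation: $(x;q)_n=(1-x)(1-xq)\cdots(1-xq^{n-1})$, $(x;q)_0=1$, $(x_1,\dots,x_m;q)_n=(x_1;q)_n\cdots(x_m;q)_n$. A Bailey pair with respect to $a$ (base $q$) is a pair of sequences $(\alpha_n,\beta_n)_{n\ge0}$ with $\alpha_0=\beta_0=1$ and, for $n>0$, $\beta_n=\sum_{j=0}^{n}\frac{\alpha_j}{(q;q)_{n-j}(aq;q)_{n+j}}$. *)

From Stdlib Require Import Reals.
Open Scope R_scope.

Definition Cx : Type := (R * R)%type.

Definition RtoC (x : R) : Cx := (x, 0).
Definition Czero : Cx := (0, 0).
Definition Cone : Cx := (1, 0).
Definition Cadd (z w : Cx) : Cx := (fst z + fst w, snd z + snd w).
Definition Copp (z : Cx) : Cx := (- fst z, - snd z).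
Definition Csub (z w : Cx) : Cx := Cadd z (Copp w).
Definition Cmul (z w : Cx) : Cx :=
  (fst z * fst w - snd z * snd w, fst z * snd w + snd z * fst w).
Definition Cinv (z : Cx) : Cx :=
  (fst z / (fst z ^ 2 + snd z ^ 2), - snd z / (fst z ^ 2 + snd z ^ 2)).
Definition Cdiv (z w : Cx) : Cx := Cmul z (Cinv w).
Definition Cnorm (z : Cx) : R := sqrt (fst z ^ 2 + snd z ^ 2).

Fixpoint Cpow (z : Cx) (n : nat) : Cx :=
  match n with O => Cone | S k => Cmul z (Cpow z k) end.

Declare Scope C_scope.
Delimit Scope C_scope with C.
Infix "+" := Cadd : C_scope.
Infix "-" := Csub : C_scope.
Notation "- z" := (Copp z) : C_scope.
Infix "*" := Cmul : C_scope.
Infix "/" := Cdiv : C_scope.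
Infix "^" := Cpow : C_scope.

Fixpoint Csum (f : nat -> Cx) (n : nat) : Cx :=
  match n with O => Czero | S k => Cadd (Csum f k) (f k) end.

Fixpoint qpoch (x q : Cx) (n : nat) : Cx :=
  match n with O => Cone | S k => Cmul (qpoch x q k) (Csub Cone (Cmul x (Cpow q k))) end.

Definition Cseries_cv (f : nat -> Cx) (l : Cx) : Prop :=
  forall eps : R, eps > 0 -> exists N : nat, forall n : nat, (n >= N)%nat ->
    Cnorm (Csub (Csum f n) l) < eps.

Definition Cabs_summable (f : nat -> Cx) : Prop :=
  exists L : R, Un_cv (fun n => sum_f_R0 (fun k => Cnorm (f k)) n) L.

Definition bailey_pair (a q : Cx) (alpha beta : nat -> Cx) : Prop :=
  alpha O = Cone /\ beta O = Cone /\
  forall n : nat, (n > 0)%nat ->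
    beta n = Csum (fun j => Cdiv (alpha j)
                      (Cmul (qpoch q q (n - j)) (qpoch (Cmul a q) q (n + j)))) (S n).

(** Write z = qa.  Inserting the Bailey relation for beta_n and exchanging the order of
    summation, the term j = 0 of the relation contributes sum_k g(z,k), the summand of the
    second expression of f_3, while the row of alpha_j (j >= 1) contributes
    alpha_j sum_k F_j(z,k).  The q-series identity sum_k F_j(w,k) = t_j(w) (telescoping for
    j = 1, then induction on j through contiguous relations) turns this row into the
    alpha-summand, so the left-hand side is sum_k g(qa,k) ([bailey_transform]; the exchange is
    justified by the geometric decay of the rows and the absolute convergence of the alpha-series).
    The same transformation applied to the unit Bailey pair (beta_n = [n = 0]), whose
    alpha-series is the first expression, yields the first equality; a Lambert-type
    rearrangement sum_k g(z,k) = sum_m t_1(z q^m) = - sum_n a q^n / (1 - a^2 q^(2n)) yields the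
    third. *)

From Pilot Require Import Defs.
From Stdlib Require Import Reals Lra Lia Field Classical.
From Coquelicot Require Complex.
Open Scope R_scope.

Lemma pow_le_one (r : R) (n : nat) : 0 <= r -> r <= 1 -> r ^ n <= 1.
Proof. intros H0 H1. induction n; simpl; [lra|]. pose proof (pow_le r n H0). nra. Qed.

Lemma pow_antitone (r : R) (m n : nat) : 0 <= r <= 1 -> (m <= n)%nat -> r ^ n <= r ^ m.
Proof.
  intros Hr Hmn. replace n with (m + (n - m))%nat by lia. rewrite pow_add.
  pose proof (pow_le r m (proj1 Hr)). pose proof (pow_le_one r (n - m) (proj1 Hr) (proj2 Hr)).
  nra.
Qed.

Fixpoint Rsum (g : nat -> R) (n : nat) : R :=
  match n with O => 0 | S k => Rsum g k + g k end.

Lemma Rsum_sum_f_R0 (g : nat -> R) (n : nat) : sum_f_R0 g n = Rsum g (S n).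
Proof. induction n; simpl in *; [lra|]. rewrite IHn. reflexivity. Qed.
Lemma Rsum_le (g h : nat -> R) (n : nat) :
  (forall k, (k < n)%nat -> g k <= h k) -> Rsum g n <= Rsum h n.
Proof.
  induction n; intros H; simpl; [lra|].
  pose proof (H n ltac:(lia)). pose proof (IHn ltac:(intros; apply H; lia)). lra.
Qed.
Lemma Rsum_nonneg (g : nat -> R) (n : nat) : (forall k, 0 <= g k) -> 0 <= Rsum g n.
Proof. induction n; intros H; simpl; [lra|]. pose proof (H n). pose proof (IHn H). lra. Qed.
Lemma Rsum_scal (c : R) (g : nat -> R) (n : nat) : Rsum (fun k => c * g k) n = c * Rsum g n.
Proof. induction n; simpl; [ring|]. rewrite IHn. ring. Qed.
Lemma Rsum_geom_le (r : R) (n : nat) : 0 <= r -> r < 1 -> Rsum (fun k => r ^ k) n <= / (1 - r).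
Proof.
  intros H0 H1.
  assert (E : Rsum (fun k => r ^ k) n = (1 - r ^ n) / (1 - r)).
  { induction n; simpl; [field; lra|]. rewrite IHn. field. lra. }
  rewrite E. pose proof (pow_le r n H0).
  unfold Rdiv. rewrite <- (Rmult_1_l (/ (1 - r))) at 2.
  apply Rmult_le_compat_r; [apply Rlt_le, Rinv_0_lt_compat|]; lra.
Qed.
Lemma Rsum_split (g : nat -> R) (K M : nat) :
  Rsum g (K + M) = Rsum g K + Rsum (fun k => g (K + k)%nat) M.
Proof. induction M; [rewrite Nat.add_0_r; simpl; ring|]. rewrite Nat.add_succ_r. simpl. rewrite IHM. ring. Qed.

Lemma exp_le (x y : R) : x <= y -> exp x <= exp y.
Proof. intros [H|H]; [left; apply exp_increasing; exact H | right; subst; reflexivity]. Qed.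

Lemma Un_cv_geom (r : R) : 0 <= r -> r < 1 -> Un_cv (fun n => r ^ n) 0.
Proof.
  intros H0 H1 eps He.
  destruct (pow_lt_1_zero r ltac:(rewrite Rabs_right; lra) eps He) as [N HN].
  exists N. intros n Hn. unfold R_dist. rewrite Rminus_0_r. auto.
Qed.

Lemma Un_cv_scal (c : R) (u : nat -> R) (l : R) : Un_cv u l -> Un_cv (fun n => c * u n) (c * l).
Proof.
  intros Hu. apply CV_mult; [|exact Hu].
  intros eps He. exists O. intros n _. unfold R_dist. rewrite Rminus_diag, Rabs_R0. exact He.
Qed.

Lemma Un_cv_scal_zero (c : R) (u : nat -> R) : Un_cv u 0 -> Un_cv (fun n => c * u n) 0.
Proof. intros Hu. rewrite <- (Rmult_0_r c). apply Un_cv_scal, Hu. Qed.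

(** The convolution of a summable nonnegative sequence with a geometric sequence
    tends to 0: sum_(i<N) a_i r^(N-i) -> 0.  This controls the error made when the
    summation order of a double series with geometric decay is exchanged. *)
Lemma geometric_convolution_cv0 (a : nat -> R) (A r : R) :
  (forall i, 0 <= a i) -> Un_cv (Rsum a) A -> 0 <= r -> r < 1 ->
  Un_cv (fun N => Rsum (fun i => a i * r ^ (N - i)) N) 0.
Proof.
  intros Ha HA Hr0 Hr1 eps He.
  assert (Hle : forall n, Rsum a n <= A).
  { apply growing_ineq; [intro n; simpl; pose proof (Ha n); lra | exact HA]. }
  assert (HA0 : 0 <= A) by (pose proof (Hle O); simpl in *; lra).
  destruct (HA (eps / 2)) as [M HM]; [lra|].
  destruct (Un_cv_geom r Hr0 Hr1 (eps / 2 / (A + 1))) as [P HP].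
  { apply Rdiv_lt_0_compat; lra. }
  exists (M + P)%nat. intros N HN. unfold R_dist. rewrite Rminus_0_r.
  (* split the convolution at M: the head is damped by r^(N-M), the tail is a tail of sum a *)
  set (d := (N - M)%nat). assert (EN : N = (M + d)%nat) by lia.
  assert (Hhead : Rsum (fun i => a i * r ^ (N - i)) M <= A * r ^ d).
  { apply Rle_trans with (Rsum (fun i => r ^ d * a i) M).
    - apply Rsum_le. intros i Hi. pose proof (Ha i).
      pose proof (pow_antitone r d (N - i) ltac:(lra) ltac:(lia)). nra.
    - rewrite Rsum_scal. pose proof (Hle M). pose proof (pow_le r d Hr0). nra. }
  assert (Htail : Rsum (fun k => a (M + k)%nat * r ^ (N - (M + k))) d <= Rsum a N - Rsum a M).
  { rewrite EN at 1. rewrite Rsum_split.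
    enough (Rsum (fun k => a (M + k)%nat * r ^ (N - (M + k))) d <= Rsum (fun k => a (M + k)%nat) d)
      by lra.
    apply Rsum_le. intros k _. pose proof (Ha (M + k)%nat).
    pose proof (pow_le_one r (N - (M + k)) Hr0 ltac:(lra)). pose proof (pow_le r (N - (M + k)) Hr0). nra. }
  assert (Hnn : 0 <= Rsum (fun i => a i * r ^ (N - i)) N).
  { apply Rsum_nonneg. intros i. pose proof (Ha i). pose proof (pow_le r (N - i) Hr0). nra. }
  rewrite Rabs_right by lra. rewrite EN at 1. rewrite Rsum_split.
  specialize (HP d ltac:(unfold d; lia)). unfold R_dist in HP.
  rewrite Rminus_0_r, Rabs_right in HP by (apply Rle_ge, pow_le; lra).
  specialize (HM M ltac:(lia)). unfold R_dist in HM. pose proof (Hle N).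
  rewrite Rabs_left1 in HM by (pose proof (Hle M); lra).
  assert (A * r ^ d <= eps / 2).
  { apply Rle_trans with ((A + 1) * (eps / 2 / (A + 1))); [|right; field; lra].
    pose proof (pow_le r d Hr0). apply Rmult_le_compat; lra. }
  lra.
Qed.

Local Open Scope C_scope.

(** The hand-made complex numbers of [Defs] coincide with Coquelicot's [C]:
    we import its field structure and the basic properties of the modulus. *)
Lemma Cx_field : field_theory Czero Cone Cadd Cmul Csub Copp Cdiv Cinv (@eq Cx).
Proof. exact Complex.C_field_theory. Qed.
Add Field Cxfield : Cx_field.

Lemma Cnorm_mul (x y : Cx) : Cnorm (x * y) = (Cnorm x * Cnorm y)%R.
Proof. exact (Complex.Cmod_mult x y). Qed.
Lemma Cnorm_triangle (x y : Cx) : Cnorm (x + y) <= Cnorm x + Cnorm y.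
Proof. exact (Complex.Cmod_triangle x y). Qed.
Lemma Cnorm_ge0 (x : Cx) : 0 <= Cnorm x.
Proof. exact (Complex.Cmod_ge_0 x). Qed.
Lemma Cnorm_opp (x : Cx) : Cnorm (- x) = Cnorm x.
Proof. exact (Complex.Cmod_opp x). Qed.
Lemma Cnorm_zero : Cnorm Czero = 0.
Proof. exact Complex.Cmod_0. Qed.
Lemma Cnorm_one : Cnorm Cone = 1.
Proof. exact Complex.Cmod_1. Qed.
Lemma Cnorm_eq0 (x : Cx) : Cnorm x = 0 -> x = Czero.
Proof. exact (Complex.Cmod_eq_0 x). Qed.
Lemma Cnorm_pos (x : Cx) : x <> Czero -> 0 < Cnorm x.
Proof. exact (proj1 (Complex.Cmod_gt_0 x)). Qed.
Lemma Cnorm_div (x y : Cx) : y <> Czero -> Cnorm (x / y) = (Cnorm x / Cnorm y)%R.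
Proof. exact (Complex.Cmod_div x y). Qed.
Lemma Cnorm_pow (x : Cx) (n : nat) : Cnorm (x ^ n) = (Cnorm x ^ n)%R.
Proof. exact (Complex.Cmod_pow x n). Qed.
Lemma Cpow_add (x : Cx) (m n : nat) : x ^ (m + n) = x ^ m * x ^ n.
Proof. exact (Complex.Cpow_add_r x m n). Qed.
Lemma Cpow_mul_base (x y : Cx) (n : nat) : (x * y) ^ n = x ^ n * y ^ n.
Proof. exact (Complex.Cpow_mult_l x y n). Qed.
Lemma Cpow_nz (x : Cx) (n : nat) : x <> Czero -> x ^ n <> Czero.
Proof. exact (Complex.Cpow_nz x n). Qed.

Lemma Cnorm_sub_sym (x y : Cx) : Cnorm (x - y) = Cnorm (y - x).
Proof. replace (x - y) with (- (y - x)) by ring. apply Cnorm_opp. Qed.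
Lemma Cnorm_reverse_triangle (x y : Cx) : Cnorm x - Cnorm y <= Cnorm (x - y).
Proof.
  pose proof (Cnorm_triangle (x - y) y) as H.
  replace (x - y + y) with x in H by ring. lra.
Qed.
Lemma Cnorm_one_sub_ge (w : Cx) : 1 - Cnorm w <= Cnorm (Cone - w).
Proof. rewrite <- Cnorm_one. apply Cnorm_reverse_triangle. Qed.
Lemma Cnorm_one_sub_le (w : Cx) : Cnorm (Cone - w) <= 1 + Cnorm w.
Proof. rewrite <- Cnorm_one, <- (Cnorm_opp w). apply Cnorm_triangle. Qed.

Lemma Cmul_add_distr_l (x y w : Cx) : x * (y + w) = x * y + x * w.
Proof. ring. Qed.

Lemma Cone_nz : Cone <> Czero.
Proof. intro E. pose proof Cnorm_one as H. rewrite E, Cnorm_zero in H. lra. Qed.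
Lemma Cmul_nz (x y : Cx) : x <> Czero -> y <> Czero -> x * y <> Czero.
Proof.
  intros Hx Hy E. apply Cnorm_pos in Hx. apply Cnorm_pos in Hy.
  assert (H : Cnorm (x * y) = 0) by (rewrite E; apply Cnorm_zero).
  rewrite Cnorm_mul in H. nra.
Qed.

Lemma Cnorm_quot_le (x y : Cx) (A d : R) : y <> Czero -> Cnorm x <= A -> 0 < d ->
  d <= Cnorm y -> Cnorm (x / y) <= A / d.
Proof.
  intros Hy Hx Hd Hdy. rewrite Cnorm_div by exact Hy. pose proof (Cnorm_ge0 x).
  unfold Rdiv. apply Rmult_le_compat; auto.
  - apply Rlt_le, Rinv_0_lt_compat. lra.
  - apply Rinv_le_contravar; auto.
Qed.

(** [nz] closes the side conditions [e <> Czero] left by [field]: each factor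
    must be ring-equal to some hypothesis [h <> Czero] (or be [Cone]). *)
Ltac solve_nz1 := match goal with
  | |- ?e <> Czero => first [assumption | exact Cone_nz |
      (change e with Cone; exact Cone_nz) |
      match goal with H : ?h <> Czero |- _ =>
        let E := fresh in intro E; apply H; transitivity e; [ring | exact E] end]
  end.
Ltac nz := repeat split; try change (R1, R0) with Cone; try change (R0, R0) with Czero;
  solve_nz1.

Lemma Csum_ext (f g : nat -> Cx) (n : nat) :
  (forall k, (k < n)%nat -> f k = g k) -> Csum f n = Csum g n.
Proof. induction n; intros H; simpl; [reflexivity|]. rewrite IHn, H; auto. Qed.
Lemma Csum_add (f g : nat -> Cx) (n : nat) : Csum (fun k => f k + g k) n = Csum f n + Csum g n.
Proof. induction n; simpl; [unfold Czero, Cadd; simpl; f_equal; ring|]. rewrite IHn. ring. Qed.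
Lemma Csum_scal (c : Cx) (f : nat -> Cx) (n : nat) : Csum (fun k => c * f k) n = c * Csum f n.
Proof. induction n; simpl; [unfold Czero, Cmul; simpl; f_equal; ring|]. rewrite IHn. ring. Qed.
Lemma Csum_zero (n : nat) : Csum (fun _ => Czero) n = Czero.
Proof. induction n; simpl; [reflexivity|]. rewrite IHn. ring. Qed.
Lemma Csum_shift (f : nat -> Cx) (n : nat) : Csum f (S n) = f O + Csum (fun k => f (S k)) n.
Proof. induction n; simpl in *; [ring|]. rewrite IHn. ring. Qed.
Lemma Csum_split (f : nat -> Cx) (K M : nat) :
  Csum f (K + M) = Csum f K + Csum (fun k => f (K + k)%nat) M.
Proof. induction M; [rewrite Nat.add_0_r; simpl; ring|]. rewrite Nat.add_succ_r. simpl. rewrite IHM. ring. Qed.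

Lemma Csum_norm (f : nat -> Cx) (n : nat) : Cnorm (Csum f n) <= Rsum (fun k => Cnorm (f k)) n.
Proof.
  induction n; simpl; [rewrite Cnorm_zero; lra|].
  eapply Rle_trans; [apply Cnorm_triangle | lra].
Qed.

Definition Ccv (u : nat -> Cx) (l : Cx) : Prop :=
  forall eps : R, eps > 0 -> exists N : nat, forall n : nat, (n >= N)%nat -> Cnorm (u n - l) < eps.

Lemma Ccv_unique (u : nat -> Cx) (l1 l2 : Cx) : Ccv u l1 -> Ccv u l2 -> l1 = l2.
Proof.
  intros H1 H2. destruct (Req_dec (Cnorm (l1 - l2)) 0) as [E|E].
  - apply Cnorm_eq0 in E. replace l1 with (l1 - l2 + l2) by ring. rewrite E. ring.
  - pose proof (Cnorm_ge0 (l1 - l2)).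
    destruct (H1 (Cnorm (l1 - l2)%C / 2)%R ltac:(lra)) as [N1 HN1].
    destruct (H2 (Cnorm (l1 - l2)%C / 2)%R ltac:(lra)) as [N2 HN2].
    set (n := (N1 + N2)%nat). specialize (HN1 n ltac:(lia)). specialize (HN2 n ltac:(lia)).
    pose proof (Cnorm_triangle (l1 - u n) (u n - l2)) as T.
    replace (l1 - u n + (u n - l2)) with (l1 - l2) in T by ring.
    rewrite (Cnorm_sub_sym l1 (u n)) in T. lra.
Qed.

Lemma Ccv_ext (u v : nat -> Cx) (l : Cx) : (forall n, u n = v n) -> Ccv u l -> Ccv v l.
Proof. intros E H eps He. destruct (H eps He) as [N HN]. exists N. intros. rewrite <- E. auto. Qed.

Lemma Ccv_const (c : Cx) : Ccv (fun _ => c) c.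
Proof. intros eps He. exists O. intros. replace (c - c) with Czero by ring. rewrite Cnorm_zero. lra. Qed.

Lemma Ccv_add (u v : nat -> Cx) (l m : Cx) : Ccv u l -> Ccv v m -> Ccv (fun n => u n + v n) (l + m).
Proof.
  intros H1 H2 eps He. destruct (H1 (eps / 2)%R ltac:(lra)) as [N1 HN1].
  destruct (H2 (eps / 2)%R ltac:(lra)) as [N2 HN2]. exists (N1 + N2)%nat. intros n Hn.
  replace (u n + v n - (l + m)) with ((u n - l) + (v n - m)) by ring.
  eapply Rle_lt_trans; [apply Cnorm_triangle|].
  specialize (HN1 n ltac:(lia)). specialize (HN2 n ltac:(lia)). lra.
Qed.

Lemma Ccv_scal (c : Cx) (u : nat -> Cx) (l : Cx) : Ccv u l -> Ccv (fun n => c * u n) (c * l).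
Proof.
  intros H eps He. pose proof (Cnorm_ge0 c).
  destruct (H (eps / (Cnorm c + 1))%R) as [N HN]; [apply Rdiv_lt_0_compat; lra|].
  exists N. intros n Hn. replace (c * u n - c * l) with (c * (u n - l)) by ring.
  rewrite Cnorm_mul. specialize (HN n Hn). pose proof (Cnorm_ge0 (u n - l)).
  apply Rle_lt_trans with ((Cnorm c + 1) * Cnorm (u n - l)%C)%R; [nra|].
  apply Rlt_le_trans with ((Cnorm c + 1) * (eps / (Cnorm c + 1)))%R; [apply Rmult_lt_compat_l; lra|].
  right. field. lra.
Qed.

Lemma Ccv_sub (u v : nat -> Cx) (l m : Cx) : Ccv u l -> Ccv v m -> Ccv (fun n => u n - v n) (l - m).
Proof.
  intros H1 H2. pose proof (Ccv_add _ _ _ _ H1 (Ccv_scal (- Cone) _ _ H2)) as H.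
  replace (l + - Cone * m) with (l - m) in H by ring.
  eapply Ccv_ext; [|exact H]. intros n. simpl. ring.
Qed.

Lemma Ccv_shift (u : nat -> Cx) (l : Cx) (K : nat) : Ccv u l -> Ccv (fun n => u (K + n)%nat) l.
Proof. intros H eps He. destruct (H eps He) as [N HN]. exists N. intros. apply HN. lia. Qed.

Lemma Ccv_bound (u : nat -> Cx) (l : Cx) (B : R) :
  Ccv u l -> (forall n, Cnorm (u n) <= B) -> Cnorm l <= B.
Proof.
  intros H Hb. apply Rnot_lt_le. intro Hlt.
  destruct (H (Cnorm l - B)%R ltac:(lra)) as [N HN]. specialize (HN N ltac:(lia)).
  pose proof (Cnorm_reverse_triangle l (u N)). rewrite Cnorm_sub_sym in H0. specialize (Hb N). lra.
Qed.

Lemma Ccv_squeeze (u : nat -> Cx) (r : nat -> R) :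
  (forall n, Cnorm (u n) <= r n) -> Un_cv r 0 -> Ccv u Czero.
Proof.
  intros Hb Hr eps He. destruct (Hr eps He) as [N HN]. exists N. intros n Hn.
  specialize (HN n Hn). unfold R_dist in HN. rewrite Rminus_0_r in HN.
  replace (u n - Czero) with (u n) by ring.
  specialize (Hb n). pose proof (Rle_abs (r n)). lra.
Qed.

Lemma Cseries_ext (f g : nat -> Cx) (l : Cx) : (forall n, f n = g n) -> Cseries_cv f l -> Cseries_cv g l.
Proof. intros E H. eapply Ccv_ext; [|exact H]. intros. apply Csum_ext. auto. Qed.

Lemma Cseries_lin (c d : Cx) (f g : nat -> Cx) (l m : Cx) : Cseries_cv f l -> Cseries_cv g m ->
  Cseries_cv (fun n => c * f n + d * g n) (c * l + d * m).
Proof.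
  intros H1 H2.
  eapply Ccv_ext; [|apply Ccv_add; apply Ccv_scal; [exact H1 | exact H2]].
  intros n. simpl. rewrite Csum_add, !Csum_scal. reflexivity.
Qed.

Lemma Cseries_scal (c : Cx) (f : nat -> Cx) (l : Cx) :
  Cseries_cv f l -> Cseries_cv (fun k => c * f k) (c * l).
Proof. intros H. eapply Ccv_ext; [|apply Ccv_scal; exact H]. intros n. symmetry. apply Csum_scal. Qed.

Lemma Cseries_tail (f : nat -> Cx) (l : Cx) : Cseries_cv f l -> Cseries_cv (fun k => f (S k)) (l - f O).
Proof.
  intros H. pose proof (Ccv_sub _ _ _ _ (Ccv_shift _ _ 1 H) (Ccv_const (f O))) as H'.
  eapply Ccv_ext; [|exact H']. intros n. cbv beta. change (1 + n)%nat with (S n). rewrite Csum_shift. ring.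
Qed.

Lemma Cseries_zero : Cseries_cv (fun _ => Czero) Czero.
Proof. eapply Ccv_ext; [|apply (Ccv_const Czero)]. intros n. symmetry. apply Csum_zero. Qed.

Lemma Cseries_remainder_bound (f : nat -> Cx) (l : Cx) (A r : R) :
  Cseries_cv f l -> 0 <= A -> 0 <= r -> r < 1 -> (forall k, Cnorm (f k) <= A * r ^ k) ->
  forall K, Cnorm (l - Csum f K) <= A * r ^ K / (1 - r).
Proof.
  intros H HA Hr0 Hr1 Hb K.
  pose proof (Ccv_sub _ _ _ _ (Ccv_shift _ _ K H) (Ccv_const (Csum f K))) as H2.
  apply (Ccv_bound _ _ _ H2). intros M. cbv beta. rewrite Csum_split.
  replace (Csum f K + Csum (fun k => f (K + k)%nat) M - Csum f K)
    with (Csum (fun k => f (K + k)%nat) M) by ring.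
  eapply Rle_trans; [apply Csum_norm|].
  apply Rle_trans with (Rsum (fun k => (A * r ^ K) * r ^ k) M)%R.
  - apply Rsum_le. intros k _. rewrite Rmult_assoc, <- pow_add. apply Hb.
  - rewrite Rsum_scal. unfold Rdiv. apply Rmult_le_compat_l.
    + apply Rmult_le_pos; [exact HA | apply pow_le; exact Hr0].
    + apply Rsum_geom_le; assumption.
Qed.

Lemma Cpow_S (x : Cx) (n : nat) : x ^ (S n) = x * x ^ n.
Proof. reflexivity. Qed.
Lemma qpoch_S (x p : Cx) (n : nat) : qpoch x p (S n) = qpoch x p n * (Cone - x * p ^ n).
Proof. reflexivity. Qed.

Lemma qpoch_add (x p : Cx) (m n : nat) : qpoch x p (m + n) = qpoch x p m * qpoch (x * p ^ m) p n.
Proof.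
  induction n; [rewrite Nat.add_0_r; simpl; ring|].
  rewrite Nat.add_succ_r. simpl. rewrite IHn, Cpow_add. ring.
Qed.

Lemma qpoch_shift (w p : Cx) (n : nat) : qpoch w p (S n) = (Cone - w) * qpoch (w * p) p n.
Proof. change (S n) with (1 + n)%nat. rewrite qpoch_add. simpl. f_equal; [ring | f_equal; ring]. Qed.

Lemma qpoch_shift_div (w p : Cx) (n : nat) :
  Cone - w <> Czero -> qpoch (w * p) p n = qpoch w p (S n) / (Cone - w).
Proof. intros H. rewrite qpoch_shift. field. exact H. Qed.

Lemma qpoch_square (q : Cx) (n : nat) : qpoch (q * q) (q * q) n = qpoch q q n * qpoch (- q) q n.
Proof. induction n; [simpl; ring|]. rewrite !qpoch_S, IHn, Cpow_mul_base. ring. Qed.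

Lemma qpoch_factor_nz (x p : Cx) (n : nat) : qpoch x p (S n) <> Czero -> Cone - x * p ^ n <> Czero.
Proof. rewrite qpoch_S. intros H E. apply H. rewrite E. ring. Qed.

Lemma qpoch_tail_nz (x p : Cx) (m n : nat) :
  qpoch x p (m + n) <> Czero -> qpoch (x * p ^ m) p n <> Czero.
Proof. rewrite qpoch_add. intros H E. apply H. rewrite E. ring. Qed.

Lemma one_sub_factor_nz (x p : Cx) : (forall n, qpoch x p n <> Czero) -> Cone - x <> Czero.
Proof.
  intros H. pose proof (qpoch_factor_nz x p 0 (H 1%nat)) as H1. simpl in H1.
  intro E; apply H1. rewrite <- E. ring.
Qed.

Lemma qpoch_self_nz (p : Cx) (n : nat) : Cnorm p < 1 -> qpoch p p n <> Czero.
Proof.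
  intros Hp. induction n; [exact Cone_nz|]. rewrite qpoch_S. apply Cmul_nz; [exact IHn|].
  intro E. pose proof (Cnorm_one_sub_ge (p * p ^ n)) as H.
  rewrite E, Cnorm_zero, Cnorm_mul, Cnorm_pow in H.
  pose proof (Cnorm_ge0 p) as H0. pose proof (pow_le_one (Cnorm p) n H0 ltac:(lra)).
  pose proof (pow_le (Cnorm p) n H0). nra.
Qed.

Lemma qpoch_norm_le (y p : Cx) (m : nat) :
  Cnorm (qpoch y p m) <= exp (Cnorm y * Rsum (fun k => Cnorm p ^ k) m)%R.
Proof.
  induction m; simpl; [rewrite Cnorm_one, Rmult_0_r, exp_0; lra|].
  rewrite Cnorm_mul, Rmult_plus_distr_l, exp_plus.
  pose proof (Cnorm_one_sub_le (y * p ^ m)) as H. rewrite Cnorm_mul, Cnorm_pow in H.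
  apply Rmult_le_compat; [apply Cnorm_ge0 | apply Cnorm_ge0 | exact IHm |].
  eapply Rle_trans; [exact H | apply exp_ineq1_le].
Qed.

Lemma qpoch_norm_ge (y p : Cx) (m : nat) :
  (1 - Cnorm y * Rsum (fun k => Cnorm p ^ k) m)%R <= Cnorm (qpoch y p m).
Proof.
  induction m; simpl; [rewrite Cnorm_one; lra|].
  rewrite Cnorm_mul. pose proof (Cnorm_one_sub_ge (y * p ^ m)) as H. rewrite Cnorm_mul, Cnorm_pow in H.
  set (A := (Cnorm y * Rsum (fun k => Cnorm p ^ k) m)%R) in *.
  set (t := (Cnorm y * Cnorm p ^ m)%R) in *.
  assert (HA : 0 <= A).
  { apply Rmult_le_pos; [apply Cnorm_ge0|].
    apply Rsum_nonneg. intros k. apply pow_le, Cnorm_ge0. }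
  assert (Ht : 0 <= t) by (apply Rmult_le_pos; [apply Cnorm_ge0 | apply pow_le, Cnorm_ge0]).
  pose proof (Cnorm_ge0 (qpoch y p m)). pose proof (Cnorm_ge0 (Cone - y * p ^ m)).
  rewrite Rmult_plus_distr_l. fold A t.
  destruct (Rle_lt_dec (1 - (A + t)) 0) as [Hneg|Hpos]; [nra|].
  apply Rle_trans with ((1 - A) * (1 - t))%R; [nra | apply Rmult_le_compat; lra].
Qed.

Lemma qpoch_upper (x p : Cx) : Cnorm p < 1 -> exists U, forall n, Cnorm (qpoch x p n) <= U.
Proof.
  intros Hp. exists (exp (Cnorm x / (1 - Cnorm p))%R). intros n.
  eapply Rle_trans; [apply qpoch_norm_le | apply exp_le].
  unfold Rdiv. apply Rmult_le_compat_l; [apply Cnorm_ge0|].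
  apply Rsum_geom_le; [apply Cnorm_ge0 | exact Hp].
Qed.

Lemma finite_min (g : nat -> R) (N : nat) : (forall k, (k < N)%nat -> 0 < g k) ->
  exists d, 0 < d /\ forall k, (k < N)%nat -> d <= g k.
Proof.
  induction N; intros H; [exists 1; split; [lra | intros; lia]|].
  destruct IHN as [d [Hd Hk]]; [intros; apply H; lia|].
  exists (Rmin d (g N)). split; [apply Rmin_pos; auto|]. intros k Hk'.
  destruct (Nat.eq_dec k N) as [->|]; [apply Rmin_r|].
  eapply Rle_trans; [apply Rmin_l | apply Hk; lia].
Qed.

(** A nonvanishing (x;p)_n stays uniformly away from 0: the factors 1 - x p^n
    tend to 1 geometrically fast. *)
Lemma qpoch_lower (x p : Cx) : Cnorm p < 1 -> (forall n, qpoch x p n <> Czero) ->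
  exists d, 0 < d /\ forall n, d <= Cnorm (qpoch x p n).
Proof.
  intros Hp Hnz. set (r := Cnorm p). pose proof (Cnorm_ge0 p) as Hr. pose proof (Cnorm_ge0 x) as HX.
  fold r in Hp, Hr.
  (* beyond an N with |x| r^N / (1 - r) <= 1/2, the tail product (x p^N;p)_m stays above 1/2 *)
  destruct (Un_cv_geom r Hr Hp ((1 - r) / (2 * (Cnorm x + 1)))%R) as [N HN].
  { apply Rdiv_lt_0_compat; lra. }
  specialize (HN N ltac:(lia)). unfold R_dist in HN.
  rewrite Rminus_0_r, Rabs_right in HN by (apply Rle_ge, pow_le; lra).
  set (c := Cnorm (qpoch x p N)). assert (Hc : 0 < c) by (apply Cnorm_pos, Hnz).
  assert (Htail : forall m, (c / 2)%R <= Cnorm (qpoch x p (N + m))).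
  { intros m. rewrite qpoch_add, Cnorm_mul. fold c.
    pose proof (qpoch_norm_ge (x * p ^ N) p m) as H. rewrite Cnorm_mul, Cnorm_pow in H. fold r in H.
    pose proof (Rsum_geom_le r m Hr Hp) as G.
    assert (Hsmall : (Cnorm x * r ^ N * / (1 - r) <= / 2)%R).
    { apply Rmult_le_reg_r with (2 * (1 - r))%R; [lra|].
      replace (Cnorm x * r ^ N * / (1 - r) * (2 * (1 - r)))%R with (2 * (Cnorm x * r ^ N))%R
        by (field; lra).
      apply Rmult_lt_compat_l with (r := (2 * (Cnorm x + 1))%R) in HN; [|lra].
      replace (2 * (Cnorm x + 1) * ((1 - r) / (2 * (Cnorm x + 1))))%R with (1 - r)%R in HN
        by (field; lra).
      pose proof (pow_le r N Hr). nra. }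
    assert (0 <= Cnorm x * r ^ N)%R by (apply Rmult_le_pos; [lra | apply pow_le; lra]).
    assert (Cnorm x * r ^ N * Rsum (fun k => r ^ k) m <= Cnorm x * r ^ N * / (1 - r))%R
      by (apply Rmult_le_compat_l; assumption).
    pose proof (Cnorm_ge0 (qpoch (x * p ^ N) p m)). nra. }
  destruct (finite_min (fun k => Cnorm (qpoch x p k)) N) as [d [Hd Hk]].
  { intros k _. apply Cnorm_pos, Hnz. }
  exists (Rmin d (c / 2)). split; [apply Rmin_pos; lra|]. intros n.
  destruct (Nat.lt_ge_cases n N) as [Hn|Hn].
  - eapply Rle_trans; [apply Rmin_l | apply Hk; exact Hn].
  - replace n with (N + (n - N))%nat by lia. eapply Rle_trans; [apply Rmin_r | apply Htail].
Qed.

Definition admissible (q w : Cx) : Prop :=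
  Cnorm w < 1 /\ (forall n, qpoch w q n <> Czero) /\ (forall n, qpoch (w * w) (q * q) n <> Czero).

Definition Fterm (q : Cx) (j : nat) (w : Cx) (k : nat) : Cx :=
  qpoch (q * q) (q * q) (j + k - 1) * (- w) ^ (j + k) / (qpoch q q k * qpoch w q (j + j + k)).

(** t_j(w) = (q^2;q^2)_(j-1) (-w)^j / (w^2;q^2)_j, the sum of the F_j(w,k). *)
Definition Fvalue (q : Cx) (j : nat) (w : Cx) : Cx :=
  qpoch (q * q) (q * q) (j - 1) * (- w) ^ j / qpoch (w * w) (q * q) j.

(** Remainder of the j = 1 series after M terms. *)
Definition Fone_remainder (q w : Cx) (M : nat) : Cx :=
  qpoch (q * q) (q * q) M * (- w) ^ (S M) * (Cone - w * q ^ (S M))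
  / (qpoch q q M * (Cone + w) * qpoch w q (S (S M))).

Lemma Cnorm_sq_lt1 (q : Cx) : Cnorm q < 1 -> Cnorm (q * q) < 1.
Proof. intros Hq. rewrite Cnorm_mul. pose proof (Cnorm_ge0 q). nra. Qed.

Lemma admissible_shift (q z : Cx) (m : nat) : Cnorm q < 1 -> admissible q z -> admissible q (z * q ^ m).
Proof.
  intros Hq [Hz [H1 H2]]. split; [|split].
  - rewrite Cnorm_mul, Cnorm_pow. pose proof (Cnorm_ge0 q) as H. pose proof (Cnorm_ge0 z).
    pose proof (pow_le_one (Cnorm q) m H ltac:(lra)). pose proof (pow_le (Cnorm q) m H). nra.
  - intros n. apply qpoch_tail_nz, H1.
  - intros n. replace (z * q ^ m * (z * q ^ m)) with (z * z * (q * q) ^ m) by (rewrite Cpow_mul_base; ring).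
    apply qpoch_tail_nz, H2.
Qed.

Lemma one_add_nz (q w : Cx) : admissible q w -> Cone + w <> Czero.
Proof.
  intros [_ [_ H2]] E. apply (qpoch_factor_nz _ _ 0 (H2 1%nat)). simpl.
  replace (Cone - w * w * Cone) with ((Cone + w) * (Cone - w)) by ring. rewrite E. ring.
Qed.

Lemma Fone_partial (q w : Cx) (M : nat) : Cnorm q < 1 -> admissible q w ->
  Csum (Fterm q 1 w) M = Fvalue q 1 w - Fone_remainder q w M.
Proof.
  intros Hq Hw. pose proof (one_add_nz q w Hw) as D. destruct Hw as [_ [H1 H2]].
  pose proof (qpoch_factor_nz _ _ 0 (H2 1%nat)) as C.
  induction M as [|M IHM].
  - unfold Fvalue, Fone_remainder. simpl.
    pose proof (qpoch_factor_nz _ _ 0 (H1 1%nat)) as A. pose proof (qpoch_factor_nz _ _ 1 (H1 2%nat)) as B.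
    simpl in *. field; nz.
  - change (Csum (Fterm q 1 w) (S M)) with (Csum (Fterm q 1 w) M + Fterm q 1 w M). rewrite IHM.
    unfold Fone_remainder, Fterm. replace (1 + M - 1)%nat with M by lia.
    replace (1 + M)%nat with (S M) by lia. replace (1 + 1 + M)%nat with (S (S M)) by lia.
    rewrite (qpoch_S (q * q) (q * q) M), (qpoch_S q q M), (qpoch_S w q (S (S M))).
    rewrite (Cpow_S (- w) (S M)), !Cpow_S, Cpow_mul_base.
    pose proof (qpoch_self_nz q M Hq) as A. pose proof (qpoch_factor_nz _ _ _ (qpoch_self_nz q (S M) Hq)) as A2.
    pose proof (H1 (S (S M))) as B. pose proof (qpoch_factor_nz _ _ _ (H1 (S (S (S M))))) as B2.
    field; nz.
Qed.

Lemma Fone_remainder_cv0 (q w : Cx) : Cnorm q < 1 -> admissible q w -> Ccv (Fone_remainder q w) Czero.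
Proof.
  intros Hq Hw. pose proof (one_add_nz q w Hw) as Hw1. pose proof Hw as [Hw0 [H1 _]].
  destruct (qpoch_upper (q * q) (q * q) (Cnorm_sq_lt1 q Hq)) as [U HU].
  destruct (qpoch_lower q q Hq (fun n => qpoch_self_nz q n Hq)) as [d1 [Hd1 HL1]].
  destruct (qpoch_lower w q Hq H1) as [d2 [Hd2 HL2]].
  pose proof (Cnorm_pos _ Hw1). pose proof (Cnorm_ge0 w). pose proof (Cnorm_ge0 q).
  set (K := (U * 2 / (d1 * Cnorm (Cone + w)%C * d2))%R).
  apply Ccv_squeeze with (r := fun M => (K * Cnorm w ^ (S M))%R).
  - intros M. unfold Fone_remainder.
    eapply Rle_trans; [apply Cnorm_quot_le with (A := (U * Cnorm w ^ S M * 2)%R)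
                                               (d := (d1 * Cnorm (Cone + w)%C * d2)%R)|].
    + apply Cmul_nz; [apply Cmul_nz; [apply qpoch_self_nz, Hq | exact Hw1] | apply H1].
    + rewrite !Cnorm_mul, Cnorm_pow, Cnorm_opp.
      pose proof (Cnorm_one_sub_le (w * q ^ S M)) as H5. rewrite Cnorm_mul, Cnorm_pow in H5.
      pose proof (pow_le_one (Cnorm q) (S M) ltac:(lra) ltac:(lra)).
      pose proof (pow_le (Cnorm q) (S M) ltac:(lra)). pose proof (pow_le (Cnorm w) (S M) ltac:(lra)).
      pose proof (HU M). pose proof (Cnorm_ge0 (qpoch (q * q) (q * q) M)).
      apply Rmult_le_compat; [apply Rmult_le_pos; auto | apply Cnorm_ge0 | |nra].
      apply Rmult_le_compat; auto; lra.
    + repeat apply Rmult_lt_0_compat; auto.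
    + rewrite !Cnorm_mul. pose proof (HL1 M). pose proof (HL2 (S (S M))).
      apply Rmult_le_compat; try lra; [apply Rmult_le_pos; lra | apply Rmult_le_compat; lra].
    + right. unfold K. field. repeat split; lra.
  - apply Un_cv_scal_zero. intros eps He. destruct (Un_cv_geom (Cnorm w) ltac:(lra) Hw0 eps He) as [N HN].
    exists N. intros n Hn. specialize (HN n Hn). unfold R_dist in *. rewrite Rminus_0_r in *.
    rewrite Rabs_right in * by (apply Rle_ge, pow_le; lra). simpl.
    pose proof (pow_le (Cnorm w) n ltac:(lra)). nra.
Qed.

Lemma Fone_series (q w : Cx) : Cnorm q < 1 -> admissible q w -> Cseries_cv (Fterm q 1 w) (Fvalue q 1 w).
Proof.
  intros Hq Hw. pose proof (Ccv_sub _ _ _ _ (Ccv_const (Fvalue q 1 w)) (Fone_remainder_cv0 q w Hq Hw)) as H.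
  replace (Fvalue q 1 w - Czero) with (Fvalue q 1 w) in H by ring.
  eapply Ccv_ext; [|exact H]. intros n. cbv beta. rewrite Fone_partial; auto.
Qed.

(** nu_j(w) = (1 - w q^(2j)) / (1 - w), the coefficient of the contiguous relations. *)
Definition nu (q : Cx) (j : nat) (w : Cx) : Cx := (Cone - w * (q ^ j * q ^ j)) / (Cone - w).

Lemma Cpow_opp_mul (w q : Cx) (n : nat) : (- (w * q)) ^ n = (- w) ^ n * q ^ n.
Proof. replace (- (w * q)) with ((- w) * q) by ring. apply Cpow_mul_base. Qed.

Lemma admissible_mul (q w : Cx) : Cnorm q < 1 -> admissible q w -> admissible q (w * q).
Proof.
  intros Hq Hw. replace (w * q) with (w * q ^ 1) by (cbn [Cpow]; ring).
  apply admissible_shift; assumption.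
Qed.

Lemma Fterm_contiguous_head (q w : Cx) (i : nat) : q <> Czero -> (forall n, qpoch w q n <> Czero) ->
  q ^ (S i) * Fterm q (S i) w 0 - nu q (S i) w * Fterm q (S i) (w * q) 0 = Czero.
Proof.
  intros Hq H1. unfold Fterm, nu. rewrite !Nat.add_0_r. replace (S i - 1)%nat with i by lia.
  pose proof (one_sub_factor_nz w q H1) as A.
  rewrite (qpoch_shift_div w q) by exact A.
  rewrite (qpoch_S w q (S i + S i)), Cpow_add, Cpow_opp_mul.
  pose proof (qpoch_factor_nz _ _ _ (H1 (S (S i + S i)))) as B. rewrite Cpow_add in B.
  pose proof (H1 (S i + S i)%nat) as C. pose proof (Cpow_nz q (S i) Hq) as D.
  field. nz.
Qed.

Lemma Fterm_contiguous (q w : Cx) (i k : nat) : q <> Czero -> Cnorm q < 1 ->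
  (forall n, qpoch w q n <> Czero) ->
  q ^ (S i) * Fterm q (S i) w (S k) - nu q (S i) w * Fterm q (S i) (w * q) (S k)
  = q ^ (S i) * Fterm q (S (S i)) w k.
Proof.
  intros Hq Hq1 H1. unfold Fterm, nu.
  replace (S i + S k - 1)%nat with (S i + k)%nat by lia.
  replace (S (S i) + k - 1)%nat with (S i + k)%nat by lia.
  replace (S i + S k)%nat with (S (S i + k)) by lia.
  replace (S (S i) + k)%nat with (S (S i + k)) by lia.
  replace (S i + S i + S k)%nat with (S (S i + S i + k)) by lia.
  replace (S (S i) + S (S i) + k)%nat with (S (S (S i + S i + k))) by lia.
  pose proof (one_sub_factor_nz w q H1) as A.
  rewrite (qpoch_shift_div w q) by exact A.
  pose proof (qpoch_factor_nz _ _ _ (H1 (S (S (S i + S i + k))))) as B1.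
  pose proof (qpoch_factor_nz _ _ _ (H1 (S (S i + S i + k)))) as B2.
  pose proof (H1 (S i + S i + k)%nat) as C. pose proof (Cpow_nz q (S i) Hq) as D.
  pose proof (qpoch_self_nz q k Hq1) as E1.
  pose proof (qpoch_factor_nz _ _ _ (qpoch_self_nz q (S k) Hq1)) as E2.
  rewrite (qpoch_S w q (S (S i + S i + k))), (qpoch_S w q (S i + S i + k)), (qpoch_S q q k), Cpow_opp_mul.
  rewrite !Cpow_S in *. rewrite !Cpow_add in *. rewrite !Cpow_S in *.
  field. nz.
Qed.

Lemma Fvalue_contiguous (q w : Cx) (i : nat) : q <> Czero -> admissible q w ->
  q ^ (S i) * Fvalue q (S i) w - nu q (S i) w * Fvalue q (S i) (w * q)
  = q ^ (S i) * Fvalue q (S (S i)) w.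
Proof.
  intros Hq [_ [H1 H2]]. unfold Fvalue, nu.
  replace (S i - 1)%nat with i by lia. replace (S (S i) - 1)%nat with (S i) by lia.
  pose proof (one_sub_factor_nz w q H1) as A. pose proof (one_sub_factor_nz _ _ H2) as A2.
  replace (w * q * (w * q)) with (w * w * (q * q)) by ring.
  rewrite (qpoch_shift_div (w * w) (q * q)) by exact A2.
  pose proof (qpoch_factor_nz _ _ _ (H2 (S (S i)))) as B1. pose proof (H2 (S i)) as B2.
  pose proof (Cpow_nz q (S i) Hq) as D.
  rewrite (qpoch_S (w * w) (q * q) (S i)), (qpoch_S (q * q) (q * q) i), Cpow_opp_mul.
  rewrite !Cpow_mul_base in *. rewrite !Cpow_S in *.
  field. nz.
Qed.

Lemma Cseries_contiguous (f g h : nat -> Cx) (l m c d e : Cx) :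
  e <> Czero -> Cseries_cv f l -> Cseries_cv g m -> c * f O - d * g O = Czero ->
  (forall k, c * f (S k) - d * g (S k) = e * h k) -> Cseries_cv h ((c * l - d * m) / e).
Proof.
  intros He Hf Hg H0 HS.
  pose proof (Cseries_tail _ _ (Cseries_lin c (- d) f g l m Hf Hg)) as H. cbv beta in H.
  replace (c * f O + - d * g O) with Czero in H by (rewrite <- H0; ring).
  pose proof (Cseries_scal (Cinv e) _ _ H) as H'.
  replace ((c * l - d * m) / e) with (Cinv e * (c * l + - d * m - Czero)) by (field; exact He).
  eapply Cseries_ext; [|exact H']. intros k. cbv beta.
  replace (c * f (S k) + - d * g (S k)) with (e * h k) by (rewrite <- HS; ring). field. exact He.
Qed.

Lemma Fterm_series (q : Cx) (j : nat) : q <> Czero -> Cnorm q < 1 ->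
  forall w, admissible q w -> Cseries_cv (Fterm q (S j) w) (Fvalue q (S j) w).
Proof.
  intros Hq Hq1. induction j as [|j IH]; intros w Hw; [apply Fone_series; assumption|].
  pose proof Hw as [_ [H1 _]].
  pose proof (Cseries_contiguous _ _ (Fterm q (S (S j)) w) _ _ (q ^ S j) (nu q (S j) w) (q ^ S j)
    (Cpow_nz q (S j) Hq) (IH w Hw) (IH (w * q) (admissible_mul q w Hq1 Hw))
    (Fterm_contiguous_head q w j Hq H1) (fun k => Fterm_contiguous q w j k Hq Hq1 H1)) as H.
  rewrite (Fvalue_contiguous q w j Hq Hw) in H.
  replace (q ^ S j * Fvalue q (S (S j)) w / q ^ S j) with (Fvalue q (S (S j)) w) in H
    by (field; apply Cpow_nz, Hq).
  exact H.
Qed.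

(** g(w,k) = (q^2;q^2)_k (-w)^(k+1) / ((q;q)_(k+1) (w;q)_(k+1)); at w = qa this is the summand
    (-q;q)_k (-qa)^(k+1) / ((qa;q)_(k+1) (1-q^(k+1))) of the second expression for f_3. *)
Definition gterm (q w : Cx) (k : nat) : Cx :=
  qpoch (q * q) (q * q) k * (- w) ^ (S k) / (qpoch q q (S k) * qpoch w q (S k)).

Lemma gterm_difference (q w : Cx) (k : nat) : Cnorm q < 1 -> (forall n, qpoch w q n <> Czero) ->
  gterm q w k - gterm q (w * q) k = Fterm q 1 w k.
Proof.
  intros Hq1 H1. unfold gterm, Fterm. replace (1 + k - 1)%nat with k by lia.
  replace (1 + k)%nat with (S k) by lia. replace (1 + 1 + k)%nat with (S (S k)) by lia.
  pose proof (one_sub_factor_nz w q H1) as A.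
  rewrite (qpoch_shift_div w q) by exact A. rewrite Cpow_opp_mul.
  pose proof (qpoch_factor_nz _ _ _ (H1 (S (S k)))) as B1. pose proof (H1 (S k)) as C.
  pose proof (qpoch_self_nz q k Hq1) as E1.
  pose proof (qpoch_factor_nz _ _ _ (qpoch_self_nz q (S k) Hq1)) as E2.
  rewrite (qpoch_S w q (S k)), (qpoch_S q q k). rewrite !Cpow_S in *.
  field. nz.
Qed.

(** Lower bound for the shifted symbols (z q^m;q)_n = (z;q)_(m+n) / (z;q)_m. *)
Lemma qpoch_shifted_lower (z q : Cx) (d U : R) : 0 < U ->
  (forall n, d <= Cnorm (qpoch z q n)) -> (forall n, Cnorm (qpoch z q n) <= U) ->
  forall m n, (d / U)%R <= Cnorm (qpoch (z * q ^ m) q n).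
Proof.
  intros HU Hd HUb m n. pose proof (Hd (m + n)%nat) as H. rewrite qpoch_add, Cnorm_mul in H.
  pose proof (HUb m). pose proof (Cnorm_ge0 (qpoch z q m)). pose proof (Cnorm_ge0 (qpoch (z * q ^ m) q n)).
  apply Rmult_le_reg_l with U; [lra|]. unfold Rdiv.
  rewrite <- Rmult_assoc, (Rmult_comm U d), Rmult_assoc, Rinv_r, Rmult_1_r by lra. nra.
Qed.

Lemma gterm_shift_bound (q z : Cx) : Cnorm q < 1 -> admissible q z ->
  exists C, 0 <= C /\ forall m k, Cnorm (gterm q (z * q ^ m) k) <= C * Cnorm (z * q ^ m) * Cnorm z ^ k.
Proof.
  intros Hq Hz. pose proof Hz as [Hz0 [Hz1 _]].
  destruct (qpoch_upper (q * q) (q * q) (Cnorm_sq_lt1 q Hq)) as [U1 HU1].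
  destruct (qpoch_upper z q Hq) as [Uz HUz].
  destruct (qpoch_lower q q Hq (fun n => qpoch_self_nz q n Hq)) as [d1 [Hd1 HL1]].
  destruct (qpoch_lower z q Hq Hz1) as [dz [Hdz HLz]].
  assert (HU1p : 0 <= U1) by (eapply Rle_trans; [apply Cnorm_ge0 | apply (HU1 O)]).
  assert (HUzp : 0 < Uz) by (eapply Rlt_le_trans; [apply (Cnorm_pos _ (Hz1 O)) | apply (HUz O)]).
  pose proof (qpoch_shifted_lower z q dz Uz HUzp HLz HUz) as Hden.
  exists (U1 * Uz / (d1 * dz))%R. split.
  { apply Rmult_le_pos; [apply Rmult_le_pos; lra|].
    apply Rlt_le, Rinv_0_lt_compat, Rmult_lt_0_compat; lra. }
  intros m k. set (w := z * q ^ m) in *.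
  assert (Hwz : Cnorm w <= Cnorm z).
  { unfold w. rewrite Cnorm_mul, Cnorm_pow. pose proof (Cnorm_ge0 z). pose proof (Cnorm_ge0 q).
    pose proof (pow_le_one (Cnorm q) m ltac:(lra) ltac:(lra)). pose proof (pow_le (Cnorm q) m ltac:(lra)).
    nra. }
  pose proof (Cnorm_ge0 w) as Hw0. unfold gterm.
  eapply Rle_trans; [apply Cnorm_quot_le with (A := (U1 * Cnorm w ^ S k)%R) (d := (d1 * (dz / Uz))%R)|].
  - apply Cmul_nz; [apply qpoch_self_nz, Hq | apply qpoch_tail_nz, Hz1].
  - rewrite Cnorm_mul, Cnorm_pow, Cnorm_opp.
    apply Rmult_le_compat; [apply Cnorm_ge0 | apply pow_le, Cnorm_ge0 | apply HU1 | lra].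
  - apply Rmult_lt_0_compat; [exact Hd1 | apply Rdiv_lt_0_compat; lra].
  - rewrite Cnorm_mul. apply Rmult_le_compat; [lra | apply Rlt_le, Rdiv_lt_0_compat; lra | apply HL1 | apply Hden].
  - change (Cnorm w ^ S k)%R with (Cnorm w * Cnorm w ^ k)%R.
    pose proof (pow_le (Cnorm w) k Hw0). pose proof (pow_incr (Cnorm w) (Cnorm z) k ltac:(lra)).
    replace (U1 * (Cnorm w * Cnorm w ^ k) / (d1 * (dz / Uz)))%R
      with (U1 * Uz / (d1 * dz) * Cnorm w * Cnorm w ^ k)%R by (field; lra).
    apply Rmult_le_compat_l; [|assumption].
    apply Rmult_le_pos; [|exact Hw0]. apply Rmult_le_pos; [apply Rmult_le_pos; lra|].
    apply Rlt_le, Rinv_0_lt_compat, Rmult_lt_0_compat; lra.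
Qed.

Lemma gterm_partial_bound (q z : Cx) : Cnorm q < 1 -> admissible q z ->
  exists B, 0 <= B /\ forall m K, Cnorm (Csum (gterm q (z * q ^ m)) K) <= B * Cnorm q ^ m.
Proof.
  intros Hq Hz. destruct (gterm_shift_bound q z Hq Hz) as [C [HC Hg]].
  pose proof Hz as [Hz0 _]. pose proof (Cnorm_ge0 z). pose proof (Cnorm_ge0 q).
  exists (C * Cnorm z * / (1 - Cnorm z))%R. split.
  { apply Rmult_le_pos; [apply Rmult_le_pos; lra | apply Rlt_le, Rinv_0_lt_compat; lra]. }
  intros m K. eapply Rle_trans; [apply Csum_norm|].
  apply Rle_trans with (Rsum (fun k => C * Cnorm (z * q ^ m)%C * Cnorm z ^ k) K)%R.
  { apply Rsum_le. intros k _. apply Hg. }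
  rewrite Rsum_scal, Cnorm_mul, Cnorm_pow.
  pose proof (Rsum_geom_le (Cnorm z) K ltac:(lra) Hz0). pose proof (pow_le (Cnorm q) m ltac:(lra)).
  assert (0 <= C * (Cnorm z * Cnorm q ^ m))%R by (apply Rmult_le_pos; [lra | apply Rmult_le_pos; lra]).
  apply Rle_trans with (C * (Cnorm z * Cnorm q ^ m) * / (1 - Cnorm z))%R.
  - apply Rmult_le_compat_l; assumption.
  - right. field. lra.
Qed.

(** sum_k g(z,k) = sum_m t_1(z q^m): peel off one Lambert term at a time with
    [gterm_difference] and [Fone_series]; the leftover sum_k g(z q^m,k) is O(|q|^m). *)
Lemma lambert_rearrangement (q z L : Cx) : Cnorm q < 1 -> admissible q z -> Cseries_cv (gterm q z) L ->
  Cseries_cv (fun m => Fvalue q 1 (z * q ^ m)) L.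
Proof.
  intros Hq Hz HL.
  assert (Hm : forall m, Cseries_cv (gterm q (z * q ^ m)) (L - Csum (fun i => Fvalue q 1 (z * q ^ i)) m)).
  { induction m as [|m IH].
    - replace (z * q ^ 0) with z by (cbn [Cpow]; ring). simpl.
      replace (L - Czero) with L by ring. exact HL.
    - set (w := z * q ^ m) in *.
      assert (Hw : admissible q w) by (apply admissible_shift; auto). pose proof Hw as [_ [Hw1 _]].
      replace (z * q ^ S m) with (w * q) by (unfold w; cbn [Cpow]; ring).
      pose proof (Cseries_lin Cone (- Cone) _ _ _ _ IH (Fone_series q w Hq Hw)) as Hc.
      replace (L - Csum (fun i => Fvalue q 1 (z * q ^ i)) (S m))
        with (Cone * (L - Csum (fun i => Fvalue q 1 (z * q ^ i)) m) + - Cone * Fvalue q 1 w)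
        by (simpl; unfold w; ring).
      eapply Cseries_ext; [|exact Hc].
      intros k. cbv beta. rewrite <- (gterm_difference q w k Hq Hw1). ring. }
  destruct (gterm_partial_bound q z Hq Hz) as [B [HB HBb]].
  assert (Hv : Ccv (fun m => L - Csum (fun i => Fvalue q 1 (z * q ^ i)) m) Czero).
  { apply Ccv_squeeze with (r := fun m => (B * Cnorm q ^ m)%R).
    - intros m. apply (Ccv_bound _ _ _ (Hm m)). intros K. apply HBb.
    - apply Un_cv_scal_zero, Un_cv_geom; [apply Cnorm_ge0 | exact Hq]. }
  pose proof (Ccv_sub _ _ _ _ (Ccv_const L) Hv) as H.
  replace (L - Czero) with L in H by ring. eapply Ccv_ext; [|exact H]. intros n. cbv beta. ring.
Qed.

(** Summands of the two Bailey-pair sums on the left-hand side (indexed by m = n - 1). *)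
Definition beta_term (q a : Cx) (beta : nat -> Cx) (m : nat) : Cx :=
  qpoch (q * q) (q * q) m * (- (q * a)) ^ (S m) * beta (S m).
Definition alpha_term (q a : Cx) (alpha : nat -> Cx) (m : nat) : Cx :=
  qpoch (q * q) (q * q) m * (- (q * a)) ^ (S m) / qpoch (q * q * (a * a)) (q * q) (S m) * alpha (S m).

(** Inserting the Bailey relation: the N-th beta summand is g(qa,N) plus the
    diagonal sum_(i<=N) alpha_(i+1) F_(i+1)(qa, N-i). *)
Lemma beta_term_expand (q a : Cx) (alpha beta : nat -> Cx) (N : nat) :
  Cnorm q < 1 -> admissible q (q * a) -> bailey_pair a q alpha beta ->
  beta_term q a beta N
  = gterm q (q * a) N + Csum (fun i => alpha (S i) * Fterm q (S i) (q * a) (N - i)) (S N).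
Proof.
  intros Hq [_ [Hz1 _]] [Ha0 [_ Hb]]. unfold beta_term. rewrite Hb by lia.
  rewrite Csum_shift, Nat.sub_0_r, Nat.add_0_r, Ha0.
  replace (a * q) with (q * a) in * by ring.
  set (z := q * a) in *. set (X := qpoch (q * q) (q * q) N * (- z) ^ S N).
  rewrite Cmul_add_distr_l. f_equal.
  - unfold gterm, X. pose proof (qpoch_self_nz q (S N) Hq). pose proof (Hz1 (S N)). field. nz.
  - rewrite <- Csum_scal. apply Csum_ext. intros i Hi. unfold Fterm, X.
    replace (S i + (N - i) - 1)%nat with N by lia. replace (S i + (N - i))%nat with (S N) by lia.
    replace (S i + S i + (N - i))%nat with (S N + S i)%nat by lia.
    replace (S N - S i)%nat with (N - i)%nat by lia.
    pose proof (qpoch_self_nz q (N - i) Hq). pose proof (Hz1 (S N + S i)%nat). field. nz.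
Qed.

(** Summing [beta_term_expand] over N < M regroups the diagonals into rows. *)
Lemma beta_partial_sums (q a : Cx) (alpha beta : nat -> Cx) (M : nat) :
  Cnorm q < 1 -> admissible q (q * a) -> bailey_pair a q alpha beta ->
  Csum (beta_term q a beta) M = Csum (gterm q (q * a)) M
    + Csum (fun i => alpha (S i) * Csum (Fterm q (S i) (q * a)) (M - i)) M.
Proof.
  intros Hq Hz Hb. induction M as [|M IH]; [simpl; ring|].
  cbn [Csum]. rewrite IH, (beta_term_expand q a alpha beta M Hq Hz Hb). cbn [Csum].
  rewrite (Csum_ext (fun i => alpha (S i) * Csum (Fterm q (S i) (q * a)) (S M - i))
             (fun i => alpha (S i) * Csum (Fterm q (S i) (q * a)) (M - i)
                       + alpha (S i) * Fterm q (S i) (q * a) (M - i)) M).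
  - rewrite Csum_add. replace (S M - M)%nat with 1%nat by lia. rewrite Nat.sub_diag. simpl. ring.
  - intros i Hi. replace (S M - i)%nat with (S (M - i)) by lia. simpl. ring.
Qed.

Lemma alpha_term_eq (q a : Cx) (alpha : nat -> Cx) (i : nat) :
  alpha_term q a alpha i = alpha (S i) * Fvalue q (S i) (q * a).
Proof.
  unfold alpha_term, Fvalue. replace (S i - 1)%nat with i by lia.
  replace (q * a * (q * a)) with (q * q * (a * a)) by ring. ring.
Qed.

Lemma row_ratio (q a : Cx) (alpha : nat -> Cx) (i k : nat) : Cnorm q < 1 -> admissible q (q * a) ->
  alpha (S i) * Fterm q (S i) (q * a) k = alpha_term q a alpha i *
   (qpoch (q * q) (q * q) (i + k) * qpoch (q * a * (q * a)) (q * q) (S i) * (- (q * a)) ^ k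
    / (qpoch (q * q) (q * q) i * qpoch q q k * qpoch (q * a) q (S i + S i + k))).
Proof.
  intros Hq [_ [Hz1 Hz2]]. rewrite alpha_term_eq. unfold Fterm, Fvalue.
  replace (S i + k - 1)%nat with (i + k)%nat by lia. replace (S i - 1)%nat with i by lia.
  rewrite Cpow_add.
  pose proof (qpoch_self_nz (q * q) i (Cnorm_sq_lt1 q Hq)). pose proof (qpoch_self_nz q k Hq).
  pose proof (Hz1 (S i + S i + k)%nat). pose proof (Hz2 (S i)).
  field. nz.
Qed.

Lemma row_bound (q a : Cx) (alpha : nat -> Cx) : Cnorm q < 1 -> admissible q (q * a) ->
  exists K, 0 <= K /\ forall i k,
    Cnorm (alpha (S i) * Fterm q (S i) (q * a) k) <= K * Cnorm (alpha_term q a alpha i) * Cnorm (q * a) ^ k.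
Proof.
  intros Hq Hz. pose proof Hz as [_ [Hz1 _]]. set (z := q * a) in *.
  pose proof (Cnorm_sq_lt1 q Hq) as Hqq.
  destruct (qpoch_upper (q * q) (q * q) Hqq) as [U1 HU1].
  destruct (qpoch_upper (z * z) (q * q) Hqq) as [Uzz HUzz].
  destruct (qpoch_lower (q * q) (q * q) Hqq (fun n => qpoch_self_nz (q * q) n Hqq)) as [d2 [Hd2 HL2]].
  destruct (qpoch_lower q q Hq (fun n => qpoch_self_nz q n Hq)) as [d1 [Hd1 HL1]].
  destruct (qpoch_lower z q Hq Hz1) as [dz [Hdz HLz]].
  assert (HU1p : 0 <= U1) by (eapply Rle_trans; [apply Cnorm_ge0 | apply (HU1 O)]).
  assert (HUzzp : 0 <= Uzz) by (eapply Rle_trans; [apply Cnorm_ge0 | apply (HUzz O)]).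
  exists (U1 * Uzz / (d2 * d1 * dz))%R. split.
  { apply Rmult_le_pos; [apply Rmult_le_pos; lra|].
    apply Rlt_le, Rinv_0_lt_compat. repeat apply Rmult_lt_0_compat; lra. }
  intros i k. unfold z. rewrite (row_ratio q a alpha i k Hq Hz). fold z.
  rewrite Cnorm_mul, (Rmult_comm _ (Cnorm (alpha_term q a alpha i))), !Rmult_assoc.
  apply Rmult_le_compat_l; [apply Cnorm_ge0|].
  eapply Rle_trans; [apply Cnorm_quot_le with (A := (U1 * Uzz * Cnorm z ^ k)%R) (d := (d2 * d1 * dz)%R)|].
  - apply Cmul_nz; [apply Cmul_nz; apply qpoch_self_nz; assumption | apply Hz1].
  - rewrite !Cnorm_mul, Cnorm_pow, Cnorm_opp.
    apply Rmult_le_compat; [apply Rmult_le_pos; apply Cnorm_ge0 | apply pow_le, Cnorm_ge0 | | lra].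
    apply Rmult_le_compat; [apply Cnorm_ge0 | apply Cnorm_ge0 | apply HU1 | apply HUzz].
  - repeat apply Rmult_lt_0_compat; lra.
  - rewrite !Cnorm_mul. apply Rmult_le_compat; [apply Rmult_le_pos; lra | lra | | apply HLz].
    apply Rmult_le_compat; [lra | lra | apply HL2 | apply HL1].
  - right. field. repeat split; lra.
Qed.

(** Exchanging the order of summation in a triangular array whose rows are bounded
    by b_i r^k with (b_i) summable: the row sums taken up to the diagonal converge
    to the full row sums, in the sense that the accumulated errors tend to 0. *)
Lemma diagonal_exchange (c : nat -> nat -> Cx) (s : nat -> Cx) (b : nat -> R) (B r : R) :
  0 <= r -> r < 1 -> (forall i, 0 <= b i) -> Un_cv (Rsum b) B ->
  (forall i, Cseries_cv (c i) (s i)) -> (forall i k, Cnorm (c i k) <= b i * r ^ k) ->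
  Ccv (fun N => Csum (fun i => Csum (c i) (N - i) - s i) N) Czero.
Proof.
  intros Hr0 Hr1 Hb HB Hc Hbound.
  apply Ccv_squeeze with (r := fun N => (/ (1 - r) * Rsum (fun i => b i * r ^ (N - i)) N)%R).
  - intros N. eapply Rle_trans; [apply Csum_norm|]. rewrite <- Rsum_scal. apply Rsum_le. intros i _.
    rewrite Cnorm_sub_sym.
    eapply Rle_trans; [apply (Cseries_remainder_bound _ _ (b i) r (Hc i) (Hb i) Hr0 Hr1 (Hbound i))|].
    right. field. lra.
  - apply Un_cv_scal_zero. apply (geometric_convolution_cv0 b B r Hb HB Hr0 Hr1).
Qed.

Lemma Cabs_summable_Rsum (f : nat -> Cx) :
  Cabs_summable f -> exists L, Un_cv (Rsum (fun k => Cnorm (f k))) L.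
Proof.
  intros [L HL]. exists L. intros eps He. destruct (HL eps He) as [N HN]. exists (S N). intros n Hn.
  destruct n as [|n]; [lia|]. rewrite <- Rsum_sum_f_R0. apply HN. lia.
Qed.

Lemma Cabs_summable_ext (f g : nat -> Cx) : (forall n, f n = g n) -> Cabs_summable f -> Cabs_summable g.
Proof.
  intros E [L HL]. exists L. eapply Un_cv_ext; [|exact HL].
  intros n. apply sum_eq. intros k _. rewrite E. reflexivity.
Qed.

Lemma Cseries_zero_terms (f : nat -> Cx) (L : Cx) : (forall n, f n = Czero) -> Cseries_cv f L -> L = Czero.
Proof. intros E H. symmetry. apply (Ccv_unique (Csum f)); [|exact H]. eapply Cseries_ext; [|exact Cseries_zero]. auto. Qed.

(** For q = 0 all three series vanish termwise: each summand has the factor (-(q a))^(m+1). *)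
Lemma bailey_transform_q0 (a : Cx) (alpha beta : nat -> Cx) (Lb La L : Cx) :
  Cseries_cv (beta_term Czero a beta) Lb -> Cseries_cv (alpha_term Czero a alpha) La ->
  Cseries_cv (gterm Czero (Czero * a)) L -> Lb - La = L.
Proof.
  intros HLb HLa HL.
  rewrite (Cseries_zero_terms (beta_term Czero a beta) Lb ltac:(intros m; unfold beta_term; rewrite Cpow_S; ring) HLb),
    (Cseries_zero_terms (alpha_term Czero a alpha) La ltac:(intros m; unfold alpha_term; rewrite Cpow_S; unfold Cdiv; ring) HLa),
    (Cseries_zero_terms (gterm Czero (Czero * a)) L ltac:(intros m; unfold gterm; rewrite Cpow_S; unfold Cdiv; ring) HL).
  ring.
Qed.

Lemma bailey_transform (q a : Cx) (alpha beta : nat -> Cx) (Lb La L : Cx) :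
  Cnorm q < 1 -> admissible q (q * a) -> bailey_pair a q alpha beta ->
  Cabs_summable (alpha_term q a alpha) ->
  Cseries_cv (beta_term q a beta) Lb -> Cseries_cv (alpha_term q a alpha) La ->
  Cseries_cv (gterm q (q * a)) L -> Lb - La = L.
Proof.
  intros Hq Hz Hb Habs HLb HLa HL.
  destruct (classic (q = Czero)) as [->|Hq0]; [exact (bailey_transform_q0 a alpha beta Lb La L HLb HLa HL)|].
  set (z := q * a) in *. pose proof Hz as [Hz0 _].
  destruct (row_bound q a alpha Hq Hz) as [K [HK Hrow]].
  destruct (Cabs_summable_Rsum _ Habs) as [A HA].
  set (D := fun N => Csum (fun i => Csum (fun k => alpha (S i) * Fterm q (S i) z k) (N - i)
                                     - alpha_term q a alpha i) N).
  assert (HD : Ccv D Czero).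
  { apply (diagonal_exchange _ _ (fun i => K * Cnorm (alpha_term q a alpha i))%R (K * A)%R (Cnorm z)).
    - apply Cnorm_ge0.
    - exact Hz0.
    - intros i. apply Rmult_le_pos; [exact HK | apply Cnorm_ge0].
    - eapply Un_cv_ext; [|apply (Un_cv_scal K _ _ HA)]. intros n. symmetry. apply Rsum_scal.
    - intros i. rewrite alpha_term_eq. apply Cseries_scal, Fterm_series; assumption.
    - exact Hrow. }
  assert (Hsplit : forall N, Csum (beta_term q a beta) N
                             = Csum (gterm q z) N + Csum (alpha_term q a alpha) N + D N).
  { intros N. rewrite (beta_partial_sums q a alpha beta N Hq Hz Hb). unfold D.
    rewrite (Csum_ext (fun i => alpha (S i) * Csum (Fterm q (S i) (q * a)) (N - i))
      (fun i => alpha_term q a alpha i + (Csum (fun k => alpha (S i) * Fterm q (S i) z k) (N - i)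
                                          - alpha_term q a alpha i)) N)
      by (intros i _; rewrite Csum_scal; fold z; ring).
    rewrite Csum_add. fold z. ring. }
  pose proof (Ccv_add _ _ _ _ (Ccv_add _ _ _ _ HL HLa) HD) as Hsum.
  assert (E : Lb = L + La + Czero).
  { apply (Ccv_unique (Csum (beta_term q a beta))); [exact HLb|].
    eapply Ccv_ext; [|exact Hsum]. intros N. symmetry. apply Hsplit. }
  rewrite E. ring.
Qed.

Fixpoint triangle (n : nat) : nat := match n with O => O | S k => (triangle k + k)%nat end.

Lemma triangle_half (n : nat) : (n * (n + 1) / 2)%nat = (triangle n + n)%nat.
Proof.
  assert (H : (n * (n + 1) = 2 * (triangle n + n))%nat) by (induction n; [reflexivity | simpl triangle; nia]).
  rewrite H, Nat.mul_comm. apply Nat.div_mul. lia.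
Qed.

Definition alpha_unit (a q : Cx) (n : nat) : Cx :=
  (Cone - a * q ^ (n + n)) * qpoch a q n * (- Cone) ^ n * q ^ (triangle n) / ((Cone - a) * qpoch q q n).
Definition beta_unit (n : nat) : Cx := match n with O => Cone | S _ => Czero end.

(** Closed form of (1 - q^(m+d)) times the partial Bailey sum up to j = m,
    from which the full sum (d = 0) vanishes. *)
Definition unit_partial_value (a q : Cx) (m d : nat) : Cx :=
  (- Cone) ^ m * q ^ (triangle (S m)) * qpoch (a * q) q m * (Cone - q ^ d)
  / (qpoch q q m * qpoch q q d * qpoch (a * q) q (m + d + m)).

Lemma unit_partial_sum (a q : Cx) (m : nat) : Cnorm q < 1 -> Cone - a <> Czero ->
  (forall n, qpoch (a * q) q n <> Czero) -> forall d,
  (Cone - q ^ (m + d))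
    * Csum (fun j => alpha_unit a q j / (qpoch q q (m + d - j) * qpoch (a * q) q (m + d + j))) (S m)
  = unit_partial_value a q m d.
Proof.
  intros Hq Ha Haq. induction m as [|m IH]; intros d.
  - simpl Csum. unfold unit_partial_value, alpha_unit. simpl triangle.
    rewrite Nat.sub_0_r, !Nat.add_0_r. simpl plus.
    pose proof (qpoch_self_nz q d Hq). pose proof (Haq d). simpl. field. nz.
  - change (Csum (fun j => alpha_unit a q j / (qpoch q q (S m + d - j) * qpoch (a * q) q (S m + d + j))) (S (S m)))
      with (Csum (fun j => alpha_unit a q j / (qpoch q q (S m + d - j) * qpoch (a * q) q (S m + d + j))) (S m)
            + alpha_unit a q (S m) / (qpoch q q (S m + d - S m) * qpoch (a * q) q (S m + d + S m))).
    replace (S m + d)%nat with (m + S d)%nat by lia.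
    rewrite Cmul_add_distr_l, IH. clear IH.
    replace (m + S d - S m)%nat with d by lia.
    replace (m + S d + S m)%nat with (S (S (m + d + m))) by lia.
    unfold unit_partial_value, alpha_unit. replace (m + S d + m)%nat with (S (m + d + m)) by lia.
    replace (S m + d + S m)%nat with (S (S (m + d + m))) by lia.
    change (triangle (S (S m))) with (triangle (S m) + S m)%nat.
    rewrite (qpoch_shift a q m).
    rewrite (qpoch_S (a * q) q (S (m + d + m))), (qpoch_S (a * q) q (m + d + m)), (qpoch_S q q d),
      (qpoch_S q q m).
    pose proof (qpoch_self_nz q d Hq) as A1. pose proof (qpoch_self_nz q m Hq) as A2.
    pose proof (Haq (m + d + m)%nat) as A3.
    pose proof (qpoch_factor_nz _ _ _ (Haq (S (m + d + m)))) as A4.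
    pose proof (qpoch_factor_nz _ _ _ (Haq (S (S (m + d + m))))) as A5.
    pose proof (qpoch_factor_nz _ _ _ (qpoch_self_nz q (S d) Hq)) as A6.
    pose proof (qpoch_factor_nz _ _ _ (qpoch_self_nz q (S m) Hq)) as A7.
    rewrite !Cpow_add in *. rewrite !Cpow_S in *. rewrite !Cpow_add in *.
    rewrite (qpoch_S (a * q) q m). field_simplify_eq; [ring | nz].
Qed.

Lemma unit_bailey_pair (a q : Cx) : Cnorm q < 1 -> Cone - a <> Czero ->
  (forall n, qpoch (a * q) q n <> Czero) -> bailey_pair a q (alpha_unit a q) beta_unit.
Proof.
  intros Hq Ha Haq. split; [|split].
  - unfold alpha_unit. simpl. field. nz.
  - reflexivity.
  - intros [|n] Hn; [lia|]. change (beta_unit (S n)) with Czero.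
    pose proof (unit_partial_sum a q (S n) Hq Ha Haq 0%nat) as H.
    rewrite Nat.add_0_r in H. unfold unit_partial_value in H. cbn [Cpow] in H.
    replace (Cone - Cone) with Czero in H by ring.
    pose proof (qpoch_factor_nz q q n (qpoch_self_nz q (S n) Hq)) as E.
    apply (f_equal (fun x => x / (Cone - q * q ^ n))) in H.
    replace ((Cone - q * q ^ n) * Csum (fun j => alpha_unit a q j / (qpoch q q (S n - j)
      * qpoch (a * q) q (S n + j))) (S (S n)) / (Cone - q * q ^ n))
      with (Csum (fun j => alpha_unit a q j / (qpoch q q (S n - j) * qpoch (a * q) q (S n + j))) (S (S n)))
      in H by (field; exact E).
    rewrite H. unfold Cdiv. ring.
Qed.

Lemma sign_sq (n : nat) : (- Cone) ^ n * (- Cone) ^ n = Cone.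
Proof.
  induction n; [cbn [Cpow]; ring|].
  rewrite Cpow_S. transitivity ((- Cone) ^ n * (- Cone) ^ n); [ring | exact IHn].
Qed.

Lemma Cpow_opp (x : Cx) (n : nat) : (- x) ^ n = (- Cone) ^ n * x ^ n.
Proof. replace (- x) with ((- Cone) * x) by ring. apply Cpow_mul_base. Qed.

Lemma qpoch_sqrt_ratio (s q : Cx) (n : nat) :
  qpoch (q * s) q n * qpoch (- (q * s)) q n * (Cone - s * s)
  = (Cone - s * s * q ^ (n + n)) * qpoch s q n * qpoch (- s) q n.
Proof.
  induction n; [simpl; ring|].
  rewrite (qpoch_S (q * s)), (qpoch_S (- (q * s))), (qpoch_S s), (qpoch_S (- s)).
  replace (S n + S n)%nat with (S (S (n + n))) by lia. rewrite !Cpow_S.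
  transitivity (qpoch (q * s) q n * qpoch (- (q * s)) q n * (Cone - s * s)
                * ((Cone - q * s * q ^ n) * (Cone - - (q * s) * q ^ n))); [ring|].
  rewrite IHn, Cpow_add. ring.
Qed.

Lemma one_sub_sq_nz (s q : Cx) : (forall n, qpoch s q n <> Czero) -> (forall n, qpoch (- s) q n <> Czero) ->
  Cone - s * s <> Czero.
Proof.
  intros H1 H2. replace (Cone - s * s) with ((Cone - s) * (Cone - - s)) by ring.
  apply Cmul_nz; apply one_sub_factor_nz with q; assumption.
Qed.

Lemma first_summand_eq (q s a : Cx) (m : nat) : s * s = a -> Cnorm q < 1 ->
  (forall n, qpoch s q n <> Czero) -> (forall n, qpoch (- s) q n <> Czero) ->
  (forall n, qpoch (q * q * (a * a)) (q * q) n <> Czero) ->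
  qpoch (q * s) q (S m) * qpoch (- (q * s)) q (S m) * qpoch a q (S m)
      * qpoch (- q) q m * q ^ (S m * (S m + 1) / 2) * a ^ (S m)
    / (qpoch s q (S m) * qpoch (- s) q (S m) * qpoch (q * q * (a * a)) (q * q) (S m)
       * (Cone - q ^ (S m)))
  = alpha_term q a (alpha_unit a q) m.
Proof.
  intros Hs Hq H1 H2 H3. subst a. pose proof (one_sub_sq_nz s q H1 H2) as B.
  assert (E : qpoch (q * s) q (S m) * qpoch (- (q * s)) q (S m)
     = (Cone - s * s * q ^ (S m + S m)) * qpoch s q (S m) * qpoch (- s) q (S m) / (Cone - s * s)).
  { rewrite <- qpoch_sqrt_ratio. field. exact B. }
  rewrite E. unfold alpha_term, alpha_unit.
  rewrite triangle_half, (Cpow_add q (triangle (S m)) (S m)), qpoch_square, (qpoch_S q q m),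
    (Cpow_opp (q * (s * s))).
  pose proof (qpoch_self_nz q m Hq). pose proof (qpoch_factor_nz _ _ _ (qpoch_self_nz q (S m) Hq)).
  pose proof (H1 (S m)). pose proof (H2 (S m)). pose proof (H3 (S m)).
  (* the two signs (-1)^(m+1) of the unit pair and of (-qa)^(m+1) cancel *)
  pose proof (sign_sq (S m)) as M. set (u := (- Cone) ^ S m) in *.
  rewrite !Cpow_S.
  match goal with |- ?L = _ => transitivity (L * (u * u)); [rewrite M; ring|] end.
  rewrite (Cpow_mul_base q (s * s) m). field. nz.
Qed.

Lemma second_summand_eq (q a : Cx) (m : nat) : Cnorm q < 1 -> (forall n, qpoch (q * a) q n <> Czero) ->
  qpoch (- q) q m * (- (q * a)) ^ (S m) / (qpoch (q * a) q (S m) * (Cone - q ^ (S m)))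
  = gterm q (q * a) m.
Proof.
  intros Hq H. unfold gterm. rewrite qpoch_square, (qpoch_S q q m).
  pose proof (qpoch_self_nz q m Hq). pose proof (qpoch_factor_nz _ _ _ (qpoch_self_nz q (S m) Hq)).
  pose proof (H (S m)). rewrite !Cpow_S. field. nz.
Qed.

Lemma third_summand_eq (q a : Cx) (m : nat) : Cnorm q < 1 -> admissible q (q * a) ->
  a * q ^ (S m) / (Cone - a * a * q ^ (2 * S m)) = - Fvalue q 1 (q * a * q ^ m).
Proof.
  intros Hq Hz. pose proof (admissible_shift q (q * a) m Hq Hz) as [_ [_ H2]].
  pose proof (qpoch_factor_nz _ _ _ (H2 1%nat)) as A. unfold Fvalue. cbn [qpoch Cpow Nat.sub] in *.
  replace (2 * S m)%nat with (S m + S m)%nat by lia. rewrite Cpow_add, !Cpow_S.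
  assert (A' : Cone - a * a * (q * q ^ m * (q * q ^ m)) <> Czero) by (intro E; apply A; rewrite <- E; ring).
  field. nz.
Qed.

(** The corollary; the series are indexed by m = n - 1 >= 0. *)
Theorem corollary3p5 (a q s : Cx) (alpha beta : nat -> Cx) :
  Cnorm q < 1 -> Cnorm (q * a) < 1 ->
  s * s = a ->
  bailey_pair a q alpha beta ->
  (* no denominator vanishes *)
  (forall n : nat, qpoch q q n <> Czero) ->
  (forall n : nat, qpoch (a * q) q n <> Czero) ->
  (forall n : nat, qpoch (q * q * (a * a)) (q * q) n <> Czero) ->
  (forall n : nat, qpoch s q n <> Czero) ->
  (forall n : nat, qpoch (- s) q n <> Czero) ->
  (forall n : nat, qpoch (q * a) q n <> Czero) ->
  (forall n : nat, (n > 0)%nat -> Cone - q ^ n <> Czero) ->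
  (forall n : nat, (n > 0)%nat -> Cone - a * a * q ^ (2 * n) <> Czero) ->
  let Tb := fun m : nat =>
    qpoch (q * q) (q * q) m * (- (q * a)) ^ (S m) * beta (S m) in
  let Ta := fun m : nat =>
    qpoch (q * q) (q * q) m * (- (q * a)) ^ (S m)
      / qpoch (q * q * (a * a)) (q * q) (S m) * alpha (S m) in
  let T1 := fun m : nat =>
    qpoch (q * s) q (S m) * qpoch (- (q * s)) q (S m) * qpoch a q (S m)
      * qpoch (- q) q m * q ^ (S m * (S m + 1) / 2) * a ^ (S m)
    / (qpoch s q (S m) * qpoch (- s) q (S m) * qpoch (q * q * (a * a)) (q * q) (S m)
       * (Cone - q ^ (S m))) in
  let T2 := fun m : nat =>
    qpoch (- q) q m * (- (q * a)) ^ (S m) / (qpoch (q * a) q (S m) * (Cone - q ^ (S m))) in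
  let T3 := fun m : nat =>
    a * q ^ (S m) / (Cone - a * a * q ^ (2 * S m)) in
  (* all series converge absolutely *)
  Cabs_summable Tb -> Cabs_summable Ta -> Cabs_summable T1 ->
  Cabs_summable T2 -> Cabs_summable T3 ->
  forall Lb La L1 L2 L3 : Cx,
    Cseries_cv Tb Lb -> Cseries_cv Ta La -> Cseries_cv T1 L1 ->
    Cseries_cv T2 L2 -> Cseries_cv T3 L3 ->
    Lb - La = - L1 /\ Lb - La = L2 /\ Lb - La = - L3.
Proof.
  intros Hq Hqa Hs Hb _ Haq Hq2 Hsn Hmsn Hqan _ _ Tb Ta T1 T2 T3 _ Hta Ht1 _ _
    Lb La L1 L2 L3 HLb HLa HL1 HL2 HL3.
  assert (Hadm : admissible q (q * a)).
  { split; [exact Hqa | split; [exact Hqan|]]. intros n.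
    replace (q * a * (q * a)) with (q * q * (a * a)) by ring. apply Hq2. }
  assert (HL2g : Cseries_cv (gterm q (q * a)) L2).
  { eapply Cseries_ext; [|exact HL2]. intros m. apply second_summand_eq; assumption. }
  pose proof (bailey_transform q a alpha beta Lb La L2 Hq Hadm Hb Hta HLb HLa HL2g) as Hmain.
  (* the unit Bailey pair, whose alpha series is the first expression *)
  assert (HT1 : forall m, T1 m = alpha_term q a (alpha_unit a q) m)
    by (intros m; exact (first_summand_eq q s a m Hs Hq Hsn Hmsn Hq2)).
  assert (Ha1 : Cone - a <> Czero) by (rewrite <- Hs; apply one_sub_sq_nz with q; assumption).
  assert (Hunit : Czero - L1 = L2).
  { apply (bailey_transform q a (alpha_unit a q) beta_unit Czero L1 L2 Hq Hadm
             (unit_bailey_pair a q Hq Ha1 Haq) (Cabs_summable_ext T1 _ HT1 Ht1));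
      [| exact (Cseries_ext T1 _ L1 HT1 HL1) | exact HL2g].
    eapply Cseries_ext; [|exact Cseries_zero]. intros m. unfold beta_term. simpl. ring. }
  (* the Lambert series, which is the third expression *)
  assert (HL3' : Cseries_cv T3 (- Cone * L2)).
  { eapply Cseries_ext; [|apply Cseries_scal, (lambert_rearrangement q (q * a) L2 Hq Hadm HL2g)].
    intros m. cbv beta. unfold T3. rewrite third_summand_eq by assumption. ring. }
  rewrite (Ccv_unique _ _ _ HL3 HL3'), Hmain, <- Hunit.
  split; [|split]; ring.
Qed.
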